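(* Let $B$ be a Lie algebra over a field $k$ satisfying $\Phi1$: $\forall x_1,\dots,x_4\ (x_1x_2)(x_3x_4)=0$, $\Phi2$: $\forall x,y\ (xyx=0\wedge xyy=0\to xy=0)$ and $\Phi3$: $\forall x,y,z\ (x\ne0\wedge xy=0\wedge xz=0\to yz=0)$. Then the set $\{b\in B: B\models \mathrm{Fit}(b)\}$, where $\mathrm{Fit}(x)\equiv\forall y\,(xyx=0)$, equals $\mathrm{Fit}(B)$. If moreover $B$ is an $F_r$-algebra, then the set $\{b\in B: bа_ib=0 \text{ for all } i=1,\dots,r\}$, i.e. the truth domain of $\mathrm{Fit}'(x)\equiv\bigwedge_{i=1}^r(xa_ix=0)$, also equals $\mathrm{Fit}(B)$.
   Context: Products are left-normed: $xyx=(xy)x$. $\mathrm{Fit}(B)$ is the sum of all nilpotent ideals of $B$. $F_r$ is the free metabelian Lie algebra over $k$ of rank $r\ge 2$ with free base $a_1,\dots,a_r$; an $F_r$-algebra is a Lie algebra containing a designated copy of $F_r$ (so $a_1,\dots,a_r\in B$). *)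

From HB Require Import structures.
From mathcomp Require Import all_boot all_order all_algebra.
Set Implicit Arguments. Unset Strict Implicit. Unset Printing Implicit Defensive.
Import GRing.Theory.
Local Open Scope ring_scope.

Section LieDefs.
Variable K : fieldType.

Definition is_lie (V : lmodType K) (br : V -> V -> V) : Prop :=
  [/\ (forall (c : K) (x y z : V), br (c *: x + y) z = c *: br x z + br y z),
      (forall (c : K) (x y z : V), br x (c *: y + z) = c *: br x y + br x z),
      (forall x : V, br x x = 0)
    & (forall x y z : V, br (br x y) z + br (br y z) x + br (br z x) y = 0)].

Definition metabelian (V : lmodType K) (br : V -> V -> V) : Prop :=
  forall x1 x2 x3 x4 : V, br (br x1 x2) (br x3 x4) = 0.

Definition lie_hom (V W : lmodType K) (brV : V -> V -> V) (brW : W -> W -> W)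
  (f : V -> W) : Prop :=
  (forall (c : K) (x y : V), f (c *: x + y) = c *: f x + f y) /\
  (forall x y : V, f (brV x y) = brW (f x) (f y)).

Definition is_free_metabelian (r : nat) (F : lmodType K) (brF : F -> F -> F)
  (a : 'I_r -> F) : Prop :=
  [/\ is_lie brF, metabelian brF &
  forall (M : lmodType K) (brM : M -> M -> M) (m : 'I_r -> M),
    is_lie brM -> metabelian brM ->
    exists f : F -> M, [/\ lie_hom brF brM f, (forall i, f (a i) = m i) &
      forall g : F -> M, lie_hom brF brM g -> (forall i, g (a i) = m i) ->
        forall x, g x = f x]].

Definition is_ideal (V : lmodType K) (br : V -> V -> V) (I : V -> Prop) : Prop :=
  [/\ I 0, (forall (c : K) (x y : V), I x -> I y -> I (c *: x + y))
    & (forall x y : V, I y -> I (br x y))].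

Definition lnprod (V : lmodType K) (br : V -> V -> V) (s : seq V) : V :=
  match s with [::] => 0 | x :: t => foldl br x t end.

Definition nilpotent_ideal (V : lmodType K) (br : V -> V -> V) (I : V -> Prop) : Prop :=
  is_ideal br I /\
  exists n : nat, forall s : seq V, size s = n.+1 -> (forall x, x \in s -> I x) ->
    lnprod br s = 0.

(* Fit(B): the sum of all nilpotent ideals, i.e. the set of finite sums of
   elements each lying in some nilpotent ideal. *)
Definition Fit (V : lmodType K) (br : V -> V -> V) (b : V) : Prop :=
  exists s : seq V, (forall x, x \in s -> exists I, nilpotent_ideal br I /\ I x) /\
    b = \sum_(x <- s) x.

Definition Phi1 (V : lmodType K) (br : V -> V -> V) : Prop := metabelian br.
Definition Phi2 (V : lmodType K) (br : V -> V -> V) : Prop :=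
  forall x y : V, br (br x y) x = 0 -> br (br x y) y = 0 -> br x y = 0.
Definition Phi3 (V : lmodType K) (br : V -> V -> V) : Prop :=
  forall x y z : V, x <> 0 -> br x y = 0 -> br x z = 0 -> br y z = 0.

End LieDefs.

(* An element b satisfies Fit(b), i.e. b y b = 0 for all y, exactly when b
   annihilates the derived algebra B^2: given b y b = 0, a nonzero b (y z)
   would annihilate both b and y z (the latter by Phi1), so Phi3 forces
   b (y z) = 0.  The annihilator of B^2 is an ideal with cube zero, hence it
   lies in Fit(B); conversely every element x of a nilpotent ideal satisfies
   (y x) x ... x = 0, and Phi2 peels off the factors x one at a time down to
   (y x) x = 0.  For the free generators, if b a_i = 0 for all i and b <> 0,
   Phi3 would give a_1 a_2 = 0, which fails in F_r since a_1 a_2 maps to a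
   nonzero element of the two-dimensional nonabelian Lie algebra. *)

From HB Require Import structures.
From mathcomp Require Import all_boot all_order all_algebra.
From mathcomp Require Import ring.
Set Implicit Arguments. Unset Strict Implicit. Unset Printing Implicit Defensive.
Import GRing.Theory.
Local Open Scope ring_scope.

Section LieAlgebra.
Variables (K : fieldType) (B : lmodType K) (br : B -> B -> B).
Hypothesis lieB : is_lie br.

Lemma brDl x y z : br (x + y) z = br x z + br y z.
Proof. by case: lieB => linl _ _ _; have := linl 1 x y z; rewrite !scale1r. Qed.

Lemma br0l z : br 0 z = 0.
Proof. by apply: (addrI (br 0 z)); rewrite -brDl !addr0. Qed.

Lemma brZl c x z : br (c *: x) z = c *: br x z.
Proof. by case: lieB => linl _ _ _; have := linl c x 0 z; rewrite !addr0 br0l addr0. Qed.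

Lemma brNl x z : br (- x) z = - br x z.
Proof. by rewrite -scaleN1r brZl scaleN1r. Qed.

Lemma brC x y : br x y = - br y x.
Proof.
case: lieB => _ linr alt _.
have brDr u v w : br u (v + w) = br u v + br u w.
  by have := linr 1 u v w; rewrite !scale1r.
apply/eqP; rewrite -addr_eq0; apply/eqP.
by have := alt (x + y); rewrite brDl !brDr !alt add0r addr0.
Qed.

Lemma ideal_sum (I : B -> Prop) (s : seq B) :
  is_ideal br I -> (forall x, x \in s -> I x) -> I (\sum_(x <- s) x).
Proof.
move=> [I0 Ilin _] Is; rewrite big_seq; apply: big_ind => // x y Ix Iy.
by have := Ilin 1 x y Ix Iy; rewrite !scale1r.
Qed.

Definition annihilates_derived (b : B) := forall y z, br b (br y z) = 0.

Lemma Fit_elem_of_annihilates_derived b :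
  annihilates_derived b -> forall y, br (br b y) b = 0.
Proof. by move=> annb y; rewrite brC annb oppr0. Qed.

Section Metabelian.
Hypothesis metaB : Phi1 br.

Lemma annihilates_derived_ideal : is_ideal br annihilates_derived.
Proof.
split=> [y z|c x y annx anny p q|x y _ p q]; first exact: br0l.
  by rewrite brDl brZl annx anny scaler0 addr0.
exact: metaB.
Qed.

Lemma annihilates_derived_nilpotent : nilpotent_ideal br annihilates_derived.
Proof.
split; first exact: annihilates_derived_ideal.
exists 2%N => -[|t1 [|t2 [|t3 [|]]]] //= _ ann.
by rewrite brC ann ?oppr0 // !inE eqxx !orbT.
Qed.

Section Phi2.
Hypothesis Phi2B : Phi2 br.

Lemma foldl_br_nseq n x u : foldl br u (nseq n x) = iter n (br^~ x) u.
Proof. by elim: n u => [|n IHn] u //=; rewrite IHn -iterSr. Qed.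

(* (p q) x is again a bracket, so induction yields ((p q) x) x = 0; as
   ((p q) x) (p q) = 0 by Phi1, Phi2 then gives (p q) x = 0. *)
Lemma engel_descent n x p q :
  iter n.+1 (br^~ x) (br p q) = 0 -> br (br p q) x = 0.
Proof.
elim: n p q => [//|n IHn] p q; rewrite iterSr => /IHn ux_x.
by apply: Phi2B => //; apply: metaB.
Qed.

Lemma nilpotent_ideal_Fit_elem (I : B -> Prop) x :
  nilpotent_ideal br I -> I x -> forall y, br (br x y) x = 0.
Proof.
move=> [[_ _ Ibr] [n In]] Ix y.
have yxI : I (br y x) by apply: Ibr.
have iter_yx0 : iter n (br^~ x) (br y x) = 0.
  rewrite -foldl_br_nseq; apply: (In (br y x :: nseq n x)); first by rewrite /= size_nseq.
  by move=> v; rewrite inE => /predU1P[->//|/nseqP[->]].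
have /engel_descent yx_x : iter n.+1 (br^~ x) (br y x) = 0 by rewrite iterS /= iter_yx0 br0l.
by rewrite (brC x y) brNl yx_x oppr0.
Qed.

Section Phi3.
Hypothesis Phi3B : Phi3 br.

Lemma annihilates_derived_of_Fit_witness b x :
  br b x <> 0 -> br (br b x) b = 0 -> annihilates_derived b.
Proof. by move=> bx_neq0 bxb y z; apply: (Phi3B bx_neq0) => //; apply: metaB. Qed.

Lemma annihilates_derived_of_Fit_elem b :
  (forall y, br (br b y) b = 0) -> annihilates_derived b.
Proof.
move=> Fitb y z; have [//|byz_neq0] := eqVneq (br b (br y z)) 0.
exact: annihilates_derived_of_Fit_witness (elimN eqP byz_neq0) (Fitb _) y z.
Qed.

Lemma annihilates_derived_of_Fit_pair b x y :
  br x y <> 0 -> br (br b x) b = 0 -> br (br b y) b = 0 -> annihilates_derived b.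
Proof.
move=> xy_neq0 bxb byb.
have [bx0|/eqP bx_neq0] := eqVneq (br b x) 0;
  last exact: annihilates_derived_of_Fit_witness bxb.
have [by0|/eqP by_neq0] := eqVneq (br b y) 0;
  last exact: annihilates_derived_of_Fit_witness byb.
have [-> ? ?|/eqP b_neq0] := eqVneq b 0; first exact: br0l.
by case: xy_neq0; apply: (Phi3B b_neq0 bx0 by0).
Qed.

Lemma Fit_annihilates_derived b : Fit br b <-> annihilates_derived b.
Proof.
split=> [[s [sFit ->]]|annb].
  apply: ideal_sum annihilates_derived_ideal _ => x /sFit[I [nilI Ix]].
  exact: annihilates_derived_of_Fit_elem (nilpotent_ideal_Fit_elem nilI Ix).
exists [:: b]; split; last by rewrite big_seq1.
move=> x; rewrite inE => /eqP->; exists annihilates_derived.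
by split; [exact: annihilates_derived_nilpotent | exact: annb].
Qed.

End Phi3.
End Phi2.
End Metabelian.
End LieAlgebra.

Lemma lie_hom0 (K : fieldType) (V W : lmodType K) (brV : V -> V -> V)
  (brW : W -> W -> W) (f : V -> W) : lie_hom brV brW f -> f 0 = 0.
Proof.
by move=> [flin _]; apply: (addrI (f 0)); have := flin 1 0 0; rewrite !scale1r !addr0.
Qed.

Section AffineLieAlgebra.
Variable K : fieldType.

(* The nonabelian two-dimensional Lie algebra [e1, e2] = e2 on K^2. *)
Definition aff : lmodType K := (K^o * K^o)%type.
Definition aff_br (x y : aff) : aff := (0, x.1 * y.2 - x.2 * y.1).

Lemma aff_scaleE (c : K) (p : aff) : c *: p = ((c * p.1 : K) : K^o, (c * p.2 : K) : K^o).
Proof. by case: p. Qed.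

Lemma aff_addE (p q : aff) : p + q = ((p.1 + q.1 : K) : K^o, (p.2 + q.2 : K) : K^o).
Proof. by case: p; case: q. Qed.

Lemma aff_lie : is_lie aff_br.
Proof.
split.
- move=> c [? ?] [? ?] [? ?]; rewrite /aff_br !aff_scaleE !aff_addE /=.
  by congr (_, _); [rewrite mulr0 addr0 | ring].
- move=> c [? ?] [? ?] [? ?]; rewrite /aff_br !aff_scaleE !aff_addE /=.
  by congr (_, _); [rewrite mulr0 addr0 | ring].
- by move=> [? ?]; rewrite /aff_br /= mulrC subrr.
- move=> [? ?] [? ?] [? ?]; rewrite /aff_br !aff_addE /=.
  by congr (_, _); [rewrite !addr0 | ring].
Qed.

Lemma aff_metabelian : metabelian aff_br.
Proof. by move=> x1 x2 x3 x4; rewrite /aff_br /= mul0r mulr0 subrr. Qed.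

Lemma free_metabelian_br_neq0 r (F : lmodType K) (brF : F -> F -> F)
  (a : 'I_r -> F) (i j : 'I_r) :
  i != j -> is_free_metabelian brF a -> brF (a i) (a j) <> 0.
Proof.
move=> ij [_ _ univF] aij0.
pose e1 : aff := ((1 : K) : K^o, (0 : K) : K^o).
pose e2 : aff := ((0 : K) : K^o, (1 : K) : K^o).
have [f [fhom fa _]] := univF aff aff_br (fun k => if k == i then e1 else e2)
  aff_lie aff_metabelian.
have := fhom.2 (a i) (a j); rewrite aij0 (lie_hom0 fhom) !fa eqxx eq_sym (negbTE ij).
by move=> /(congr1 snd) /= /eqP; rewrite mulr1 mul0r subr0 eq_sym oner_eq0.
Qed.

End AffineLieAlgebra.

Theorem lemma3p3 (K : fieldType) (B : lmodType K) (br : B -> B -> B) :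
  is_lie br -> Phi1 br -> Phi2 br -> Phi3 br ->
  (forall b : B, (forall y : B, br (br b y) b = 0) <-> Fit br b) /\
  (forall (r : nat) (F : lmodType K) (brF : F -> F -> F) (a : 'I_r -> F)
          (phi : F -> B),
     (2 <= r)%N -> is_free_metabelian brF a ->
     lie_hom brF br phi -> injective phi ->
     forall b : B, (forall i : 'I_r, br (br b (phi (a i))) b = 0) <-> Fit br b).
Proof.
move=> lieB metaB Phi2B Phi3B.
have FitE b := Fit_annihilates_derived lieB metaB Phi2B Phi3B b.
split=> [b|r F brF a phi r_ge2 freeF phihom phi_inj b]; rewrite FitE.
  split; [exact: annihilates_derived_of_Fit_elem | exact: Fit_elem_of_annihilates_derived].
split=> [Fit'b|annb i]; last exact: Fit_elem_of_annihilates_derived.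
pose i0 : 'I_r := Ordinal (ltnW r_ge2); pose i1 : 'I_r := Ordinal r_ge2.
have a01_neq0 : br (phi (a i0)) (phi (a i1)) <> 0.
  rewrite -phihom.2 -(lie_hom0 phihom) => /phi_inj.
  exact: free_metabelian_br_neq0 (isT : i0 != i1) freeF.
exact: annihilates_derived_of_Fit_pair a01_neq0 (Fit'b i0) (Fit'b i1).
Qed.
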